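(* Let $G$ be a graph and $uv\in E(G)$. Let $W_1=N(u)\setminus N[v]$, $W_2=N(u)\cap N(v)$, $W_3=N(v)\setminus N[u]$ and $W_4=V(G)\setminus (N[u]\cup N[v])$. Suppose there is no maximal induced matching $M$ of $G$ with $V(M)\subseteq W_1\cup W_4$ and $V(M)\cap W_1\ne\emptyset$, and there is no maximal induced matching $M$ of $G$ with $V(M)\subseteq W_3\cup W_4$ and $V(M)\cap W_3\neq\emptyset$. Then $|M_{G_{T_G(u)\to v}}|\ge |M_G|$ or $|M_{G_{T_G(v)\to u}}|\ge |M_G|$.
   Context: Graphs are finite, simple, undirected. $N(x)$, $N[x]$ are the open and closed neighborhoods. An induced matching is a matching whose endpoints induce a $1$-regular subgraph; it is maximal if not properly contained in another induced matching; $M_G$ is the set of maximal induced matchings of $G$; $V(M)$ is the set of vertices covered by $M$. For a vertex $v$, $T_G(v)=\{w\in V(G): N_G[w]=N_G[v]\}$ (the twin set of $v$). For $uv\in E(G)$, making $v$ into a twin of $u$ means deleting the edge $vx$ for every $x\in N(v)\setminus N[u]$ and adding the edge $vy$ for every $y\in N(u)\setminus N[v]$. $G_{T_G(v)\to u}$ is the graph obtained from $G$ by making each vertex of $T_G(v)$ into a twin of $u$; $G_{T_G(u)\to v}$ is defined symmetrically. *)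

(* A finite simple graph on a finType T is a symmetric,
   irreflexive boolean relation e : rel T. *)
From mathcomp Require Import all_boot.
Set Implicit Arguments. Unset Strict Implicit. Unset Printing Implicit Defensive.

Section Graph.
Variable T : finType.

Definition nbh (e : rel T) (x : T) : {set T} := [set y | e x y].
Definition cnbh (e : rel T) (x : T) : {set T} := x |: nbh e x.

Definition is_edge_set (e : rel T) (m : {set T}) : bool :=
  [exists x, exists y, e x y && (m == [set x; y])].

(* M (a set of edges) is an induced matching: M is a matching (its edges are
   pairwise disjoint) and the subgraph induced by V(M) = cover M is 1-regular *)
Definition induced_matching (e : rel T) (M : {set {set T}}) : bool :=
  [&& [forall m in M, is_edge_set e m], trivIset M &
      [forall x in cover M, #|nbh e x :&: cover M| == 1]].

Definition maximal_induced_matching (e : rel T) (M : {set {set T}}) : bool :=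
  induced_matching e M &&
  [forall M' : {set {set T}}, (induced_matching e M' && (M \subset M')) ==> (M' == M)].

Definition MIM (e : rel T) : {set {set {set T}}} :=
  [set M | maximal_induced_matching e M].

Definition twins (e : rel T) (v : T) : {set T} := [set w | cnbh e w == cnbh e v].

Definition make_twin (e : rel T) (w u : T) : rel T :=
  let f y := if y \in nbh e w :\: cnbh e u then false
             else if y \in nbh e u :\: cnbh e w then true
             else e w y in
  fun x y => if x == w then f y else if y == w then f x else e x y.

Definition twin_to (e : rel T) (S : {set T}) (u : T) : rel T :=
  foldl (fun r w => make_twin r w u) e (enum S).

End Graph.

From mathcomp Require Import all_boot fingroup perm zify.
From Stdlib Require Import FunctionalExtensionality.
Set Implicit Arguments. Unset Strict Implicit. Unset Printing Implicit Defensive.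

(* A maximal induced matching is determined by its vertex set S, and the sets
   that occur are those for which G[S] is 1-regular and every edge meets N[S];
   we count these sets.  Let A = T(u), B = T(v), a = |A|, b = |B|; A ∪ B is a
   clique inside N[u] ∩ N[v], so every S meets it in at most two vertices.
   Sorting the sets of G by (|S ∩ A|, |S ∩ B|) = (i, j) and by the trace
   S \ (A ∪ B), with z_ij traces of type (i, j),
     |M_G| <= z00 + a z10 + C(a,2) z20 + b z01 + C(b,2) z02 + a b z11.
   In G1 = G_{T(u)->v} all of A ∪ B are twins of v, so a trace of a set of G1
   meeting A ∪ B in k vertices combines with every k-subset of A ∪ B, and with
   y_k such traces |M_G1| >= y0 + (a+b) y1 + C(a+b,2) y2.  The hypotheses say
   that a set of G avoiding N[v] avoids N(u), and vice versa; so a set of G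
   avoiding A meets both N(u) and N[v], hence dominates A in G and in G1 and
   is a set of G1: z0j <= yj.  A trace R of type (1,1) lies in W4; extending
   it to a maximal 1-regular set X outside N[v] and adding u, v gives a set of
   G1 with trace X, and R is recovered from X as its edges inside W4:
   z11 <= y2.
   Symmetrically for G2 = G_{T(v)->u}, and then
   (a+b) |M_G| <= b |M_G1| + a |M_G2|.  If u and v are twins, G1 = G. *)

Lemma bin2_mul2 n : 'C(n, 2) * 2 = n * n.-1.
Proof. by rewrite bin2 -divn2 divnK // dvdn2 oddM; case: n => //= n; case: (odd n). Qed.

Lemma leq_weighted_mean_or a b g g1 g2 : 0 < a -> 0 < b ->
  (a + b) * g <= b * g1 + a * g2 -> g <= g1 \/ g <= g2.
Proof.
move=> a_gt0 b_gt0 le_g; case: (leqP g g1) => [|lt_g1]; [by left | right].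
rewrite leqNgt; apply/negP => lt_g2; nia.
Qed.

Lemma quadratic_profile_le_double a b z20 z02 z11 y2 x2 : 0 < a ->
  z02 <= y2 -> z11 <= y2 -> z20 <= x2 -> z11 <= x2 ->
  a * a.-1 * z20 + b * b.-1 * z02 + 2 * (a * b * z11) <= (a + b).-1 * (b * y2 + a * x2).
Proof.
move=> a_gt0 h1 h2 h3 h4.
have := leq_mul (leqnn (b * b.-1)) h1; have := leq_mul (leqnn (a * a.-1)) h3.
have := leq_mul (leqnn (a * b)) h2; have := leq_mul (leqnn (a * b)) h4.
case: a a_gt0 {h1 h2 h3 h4} => // a _; rewrite addSn /=.
case: b => [|b] /=; lia.
Qed.

Lemma quadratic_profile_le a b z20 z02 z11 y2 x2 : 0 < a ->
  z02 <= y2 -> z11 <= y2 -> z20 <= x2 -> z11 <= x2 ->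
  (a + b) * ('C(a, 2) * z20 + 'C(b, 2) * z02 + a * b * z11)
    <= 'C(a + b, 2) * (b * y2 + a * x2).
Proof.
move=> a_gt0 h1 h2 h3 h4; rewrite -(leq_pmul2r (isT : 0 < 2)).
have -> : 'C(a + b, 2) * (b * y2 + a * x2) * 2 = (a + b) * ((a + b).-1 * (b * y2 + a * x2)).
  by rewrite mulnAC bin2_mul2 mulnA.
have -> : (a + b) * ('C(a, 2) * z20 + 'C(b, 2) * z02 + a * b * z11) * 2
        = (a + b) * (a * a.-1 * z20 + b * b.-1 * z02 + 2 * (a * b * z11)).
  by rewrite -!bin2_mul2; lia.
by rewrite leq_mul2l quadratic_profile_le_double ?orbT.
Qed.

Lemma linear_profile_le a b z00 z10 z01 y0 y1 x0 x1 :
  z00 <= y0 -> z01 <= y1 -> z00 <= x0 -> z10 <= x1 ->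
  (a + b) * (z00 + a * z10 + b * z01) <= b * (y0 + (a + b) * y1) + a * (x0 + (a + b) * x1).
Proof.
move=> h1 h2 h3 h4.
have := leq_mul (leqnn b) h1; have := leq_mul (leqnn a) h3.
have := leq_mul (leqnn (b * (a + b))) h2; have := leq_mul (leqnn (a * (a + b))) h4.
lia.
Qed.

Lemma profile_bound_or a b (z : nat -> nat -> nat) (y x : nat -> nat) g g1 g2 :
  0 < a -> 0 < b ->
  g <= z 0 0 + a * z 1 0 + 'C(a, 2) * z 2 0 + b * z 0 1 + 'C(b, 2) * z 0 2 + a * b * z 1 1 ->
  y 0 + (a + b) * y 1 + 'C(a + b, 2) * y 2 <= g1 ->
  (forall j, z 0 j <= y j) -> z 1 1 <= y 2 ->
  x 0 + (a + b) * x 1 + 'C(a + b, 2) * x 2 <= g2 ->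
  (forall i, z i 0 <= x i) -> z 1 1 <= x 2 ->
  g <= g1 \/ g <= g2.
Proof.
move=> a_gt0 b_gt0 le_g le_g1 zy zy11 le_g2 zx zx11; apply: (leq_weighted_mean_or a_gt0 b_gt0).
have := leq_mul (leqnn (a + b)) le_g; have := leq_mul (leqnn b) le_g1.
have := leq_mul (leqnn a) le_g2.
have := linear_profile_le a b (zy 0) (zy 1) (zx 0) (zx 1).
have := quadratic_profile_le b a_gt0 (zy 2) zy11 (zx 2) zx11.
lia.
Qed.

Section InducedMatchings.
Variable T : finType.
Implicit Types (e : rel T) (S : {set T}) (M : {set {set T}}).

Definition one_regular e S := [forall x in S, #|nbh e x :&: S| == 1].

Definition cnbhs e S : {set T} := [set y | [exists x in S, y \in cnbh e x]].

Definition edge_dominating e S :=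
  [forall x, forall y, e x y ==> (x \in cnbhs e S) || (y \in cnbhs e S)].

Definition mim_cover e S := one_regular e S && edge_dominating e S.

Definition MIM_covers e : {set {set T}} := [set S | mim_cover e S].

Definition induced_edges e S : {set {set T}} :=
  [set m : {set T} | (m \subset S) && is_edge_set e m].

Variable e : rel T.
Hypothesis esym : symmetric e.
Hypothesis eirr : irreflexive e.
Implicit Types (x y z : T).

Lemma one_regularP S :
  reflect {in S, forall x, exists2 y, y \in S & e x y /\ {in S, forall z, e x z -> z = y}}
          (one_regular e S).
Proof.
apply: (iffP forall_inP) => [reg x xS | uniq_nb x xS].
  have /cards1P [y nbx] := reg x xS.
  have : y \in nbh e x :&: S by rewrite nbx set11.
  rewrite !inE => /andP [exy yS]; exists y => //; split=> // z zS exz.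
  by apply/set1P; rewrite -nbx !inE exz.
have [y yS [exy yU]] := uniq_nb x xS; apply/cards1P; exists y.
by apply/setP => z; rewrite !inE; apply/andP/eqP => [[exz zS] | ->]; [apply: yU | ].
Qed.

Lemma one_regular_partner S x : one_regular e S -> x \in S -> exists2 y, y \in S & e x y.
Proof. by move=> /one_regularP reg /reg [y yS [exy _]]; exists y. Qed.

Lemma one_regular_uniq S x y z : one_regular e S -> x \in S -> y \in S -> z \in S ->
  e x y -> e x z -> y = z.
Proof.
move=> /one_regularP reg /reg [w _ [_ wU]] yS zS exy exz.
by rewrite (wU y yS exy) (wU z zS exz).
Qed.

Lemma cnbhs_cnbh S x y : x \in S -> y \in cnbh e x -> y \in cnbhs e S.
Proof. by move=> xS yx; rewrite inE; apply/exists_inP; exists x. Qed.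

Lemma cnbhs_mem S x : x \in S -> x \in cnbhs e S.
Proof. by move=> xS; apply: cnbhs_cnbh xS _; rewrite setU11. Qed.

Lemma cnbhs_adj S x y : x \in S -> e x y -> y \in cnbhs e S.
Proof. by move=> xS exy; apply: cnbhs_cnbh xS _; rewrite !inE exy orbT. Qed.

Lemma notin_cnbhsP S y :
  reflect (y \notin S /\ {in S, forall x, ~~ e x y}) (y \notin cnbhs e S).
Proof.
apply: (iffP idP) => [yN | [yS nadj]].
  by split=> [|x xS]; apply: contra yN; [apply: cnbhs_mem | apply: cnbhs_adj].
rewrite inE; apply/exists_inP => -[x xS]; rewrite !inE => /orP [/eqP yx | exy].
  by move: yS; rewrite yx xS.
by move: (nadj x xS); rewrite exy.
Qed.

Lemma edge_dominatingP S :
  reflect (forall x y, e x y -> x \notin cnbhs e S -> y \notin cnbhs e S -> False)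
          (edge_dominating e S).
Proof.
apply: (iffP forallP) => [dom x y exy xN yN | dom x].
  by move: (forallP (dom x) y); rewrite exy (negbTE xN) (negbTE yN).
apply/forallP => y; apply/implyP => exy; apply/norP => -[xN yN]; exact: dom exy xN yN.
Qed.

Lemma one_regular_add S x y : one_regular e S -> e x y ->
  x \notin cnbhs e S -> y \notin cnbhs e S -> one_regular e (x |: (y |: S)).
Proof.
move=> /one_regularP reg exy /notin_cnbhsP [xS xN] /notin_cnbhsP [yS yN].
have Sx z : z \in S -> e z x = false by move=> zS; rewrite (negbTE (xN z zS)).
have Sy z : z \in S -> e z y = false by move=> zS; rewrite (negbTE (yN z zS)).
apply/one_regularP => z; rewrite !inE => /or3P [/eqP -> | /eqP -> | zS].
- exists y; rewrite ?inE ?eqxx ?orbT //; split=> // w.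
  by rewrite !inE esym => /or3P [/eqP -> | /eqP -> | /Sx ->]; rewrite ?eirr.
- exists x; rewrite ?inE ?eqxx //; split=> [|w]; first by rewrite esym.
  by rewrite !inE esym => /or3P [/eqP -> | /eqP -> | /Sy ->]; rewrite ?eirr.
- have [w wS [ezw wU]] := reg z zS; exists w; rewrite ?inE ?wS ?orbT //; split=> // t.
  by rewrite !inE => /or3P [/eqP -> | /eqP -> | /wU //]; rewrite ?Sx ?Sy.
Qed.

Lemma is_edge_setP m z : is_edge_set e m -> z \in m -> exists2 w, e z w & m = [set z; w].
Proof.
move=> /existsP [x /existsP [y /andP [exy /eqP ->]]]; rewrite !inE.
by case/orP => /eqP ->; [exists y | exists x; rewrite 1?esym 1?setUC].
Qed.

Lemma cover_induced_edges S : one_regular e S -> cover (induced_edges e S) = S.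
Proof.
move=> reg; apply/setP => x; apply/bigcupP/idP => [[m] | xS].
  by rewrite inE => /andP [/subsetP mS _] /mS.
have [y yS exy] := one_regular_partner reg xS.
exists [set x; y]; last by rewrite set21.
rewrite inE subUset !sub1set xS yS.
by apply/existsP; exists x; apply/existsP; exists y; rewrite exy eqxx.
Qed.

Lemma induced_edges_matching S : one_regular e S -> induced_matching e (induced_edges e S).
Proof.
move=> reg; apply/and3P; split; last by rewrite cover_induced_edges.
  by apply/forall_inP => m; rewrite inE => /andP [].
apply/trivIsetP => m1 m2; rewrite !inE => /andP [m1S m1e] /andP [m2S m2e] m12.
rewrite -setI_eq0; apply: contraR m12 => /set0Pn [z]; rewrite inE => /andP [zm1 zm2].
have [w1 ezw1 em1] := is_edge_setP m1e zm1; have [w2 ezw2 em2] := is_edge_setP m2e zm2.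
have w1S : w1 \in S by apply: (subsetP m1S); rewrite em1 set22.
have w2S : w2 \in S by apply: (subsetP m2S); rewrite em2 set22.
have zS : z \in S by apply: (subsetP m1S).
by rewrite em1 em2 (one_regular_uniq reg zS w1S w2S ezw1 ezw2).
Qed.

Lemma induced_matching_one_regular M : induced_matching e M -> one_regular e (cover M).
Proof. by case/and3P. Qed.

Lemma induced_matchingE M : induced_matching e M -> M = induced_edges e (cover M).
Proof.
move=> iM; have reg := induced_matching_one_regular iM.
case/and3P: iM => /forall_inP Medge _ _.
apply/setP => m; rewrite inE; apply/idP/andP => [mM | [/subsetP mC me]].
  by split; [exact: bigcup_sup mM | exact: Medge].
have [x [y [exy em]]] : exists x y, e x y /\ m = [set x; y].
  by case/existsP: me => x /existsP [y /andP [exy /eqP em]]; exists x, y.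
have xC : x \in cover M by apply: mC; rewrite em set21.
have yC : y \in cover M by apply: mC; rewrite em set22.
case/bigcupP: (xC) => m' m'M xm'.
have [w exw em'] := is_edge_setP (Medge m' m'M) xm'.
have wC : w \in cover M by apply/bigcupP; exists m'; rewrite // em' set22.
by rewrite em (one_regular_uniq reg xC yC wC exy exw) -em'.
Qed.

Lemma induced_edgesS S S' : S \subset S' -> induced_edges e S \subset induced_edges e S'.
Proof.
move=> sSS'; apply/subsetP => m; rewrite !inE => /andP [mS ->].
by rewrite (subset_trans mS sSS').
Qed.

Lemma coverS M M' : M \subset M' -> cover M \subset cover M'.
Proof.
move=> /subsetP sMM'; apply/subsetP => x /bigcupP [m mM xm].
by apply/bigcupP; exists m; rewrite ?sMM'.
Qed.

Lemma one_regular_notin_cnbhs S S' z : one_regular e S -> one_regular e S' ->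
  S \subset S' -> z \in S' -> z \notin S -> z \notin cnbhs e S.
Proof.
move=> reg reg' /subsetP sSS' zS' zS; apply/notin_cnbhsP; split=> // x xS.
have [y yS exy] := one_regular_partner reg xS.
apply: contra zS => exz.
by rewrite (one_regular_uniq reg' (sSS' x xS) zS' (sSS' y yS) exz exy).
Qed.

Lemma one_regular_setD_edge S a b : one_regular e S -> a \in S -> b \in S -> e a b ->
  one_regular e (S :\: [set a; b]).
Proof.
move=> reg aS bS eab; apply/one_regularP => x; rewrite !inE negb_or => /andP [/andP [xa xb] xS].
have [y yS [exy yU]] := (one_regularP _ reg) x xS.
have ya : y != a.
  apply: contraNneq xb => ya; apply/eqP/(one_regular_uniq reg aS xS bS) => //.
  by rewrite esym -ya.
have yb : y != b.
  apply: contraNneq xa => yb; apply/eqP/(one_regular_uniq reg bS xS aS); last by rewrite esym.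
  by rewrite esym -yb.
exists y; first by rewrite !inE negb_or ya yb yS.
by split=> // z; rewrite !inE => /andP [_ zS]; apply: yU.
Qed.

Lemma maximal_induced_matchingE M :
  maximal_induced_matching e M = induced_matching e M && edge_dominating e (cover M).
Proof.
rewrite /maximal_induced_matching; case iM: (induced_matching e M) => //=.
have reg := induced_matching_one_regular iM.
apply/forallP/edge_dominatingP => [maxM x y exy xN yN | dom M'].
  have reg' := one_regular_add reg exy xN yN.
  have sub : cover M \subset x |: (y |: cover M).
    exact: subset_trans (subsetU1 y _) (subsetU1 x _).
  have := maxM (induced_edges e (x |: (y |: cover M))).
  rewrite induced_edges_matching // {1}(induced_matchingE iM) induced_edgesS //=.
  move=> /eqP/(congr1 cover); rewrite cover_induced_edges // => ecov.
  by move: xN; rewrite -ecov cnbhs_mem // setU11.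
apply/implyP => /andP [iM' sMM']; have reg' := induced_matching_one_regular iM'.
have sCC' := coverS sMM'.
suff ecov : cover M' = cover M.
  by rewrite (induced_matchingE iM') ecov -(induced_matchingE iM).
apply/eqP; rewrite eqEsubset sCC' andbT; apply/subsetP => z zC'.
apply: contraT => zC.
have zN := one_regular_notin_cnbhs reg reg' sCC' zC' zC.
have [w wC' ezw] := one_regular_partner reg' zC'.
have wC : w \notin cover M.
  by apply: contra zN => wC; apply: (cnbhs_adj wC); rewrite esym.
by case: (dom z w ezw zN (one_regular_notin_cnbhs reg reg' sCC' wC' wC)).
Qed.

Lemma mim_cover_edges S : mim_cover e S -> induced_edges e S \in MIM e.
Proof.
case/andP=> reg dom.
by rewrite inE maximal_induced_matchingE induced_edges_matching ?cover_induced_edges.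
Qed.

Lemma MIM_coversP S : S \in MIM_covers e -> exists2 M, M \in MIM e & cover M = S.
Proof.
rewrite inE => cS; exists (induced_edges e S); first exact: mim_cover_edges.
by rewrite cover_induced_edges //; case/andP: cS.
Qed.

Lemma card_MIM_covers : #|MIM e| = #|MIM_covers e|.
Proof.
have -> : MIM_covers e = cover @: MIM e.
  apply/setP => S; apply/idP/imsetP => [/MIM_coversP [M MM <-] | [M]]; first by exists M.
  rewrite inE maximal_induced_matchingE => /andP [iM dom] ->.
  by rewrite inE /mim_cover dom induced_matching_one_regular.
rewrite card_in_imset // => M1 M2; rewrite !inE !maximal_induced_matchingE.
case/andP=> iM1 _ /andP [iM2 _] ecov.
by rewrite (induced_matchingE iM1) ecov -induced_matchingE.
Qed.

End InducedMatchings.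

Section Twins.
Variable T : finType.
Variable e : rel T.
Hypothesis esym : symmetric e.
Hypothesis eirr : irreflexive e.
Implicit Types (S P C : {set T}) (x y z : T).

Lemma mim_cover_involution (f : T -> T) S : involutive f ->
  (forall a b, e (f a) (f b) = e a b) -> mim_cover e S -> mim_cover e (f @: S).
Proof.
move=> fK fE; rewrite (can2_imset_pre _ fK fK) => /andP [/forall_inP reg /edge_dominatingP dom].
have cnbhfE a b : (f a \in cnbh e (f b)) = (a \in cnbh e b).
  by rewrite !inE (inj_eq (inv_inj fK)) fE.
have cnbhsE y : (y \in cnbhs e (f @^-1: S)) = (f y \in cnbhs e S).
  rewrite !inE; apply/exists_inP/exists_inP => -[x xS yx].
    by exists (f x); rewrite ?cnbhfE //; move: xS; rewrite inE.
  by exists (f x); [rewrite inE fK | rewrite -cnbhfE fK].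
apply/andP; split.
  apply/forall_inP => x; rewrite inE => /reg.
  have -> : nbh e x :&: f @^-1: S = f @^-1: (nbh e (f x) :&: S).
    by apply/setP => z; rewrite !inE fE.
  by rewrite card_preimset //; apply: inv_inj.
by apply/edge_dominatingP => a b eab; rewrite !cnbhsE; apply: dom; rewrite fE.
Qed.

Lemma twin_adj x y z : cnbh e x = cnbh e y -> z != x -> z != y -> e x z = e y z.
Proof.
move=> exy zx zy; have : (z \in cnbh e x) = (z \in cnbh e y) by rewrite exy.
by rewrite !inE (negbTE zx) (negbTE zy).
Qed.

Lemma tperm_twins x y : cnbh e x = cnbh e y ->
  forall a b, e (tperm x y a) (tperm x y b) = e a b.
Proof.
move=> exy a b; have twx z : z != x -> z != y -> e x z = e y z by apply: twin_adj.
case: tpermP => [-> | -> | /eqP ax /eqP ay]; case: tpermP => [-> | -> | /eqP bx /eqP by_];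
  first [by rewrite !eirr | by rewrite esym | by rewrite twx | by rewrite ![e a _]esym twx].
Qed.

Lemma mim_cover_replace_twins C S P : {in C &, forall x y, cnbh e x = cnbh e y} ->
  P \subset C -> #|P| = #|S :&: C| -> mim_cover e S -> mim_cover e ((S :\: C) :|: P).
Proof.
(* Induction on |P \ S|: a transposition of two twins is an automorphism. *)
move=> twC PC; have [n] := ubnP #|P :\: S|; elim: n S => // n IH S ltPS cardP cS.
have [PS0 | [y yPS]] := set_0Vmem (P :\: S).
  have sP : P \subset S :&: C by rewrite subsetI -setD_eq0 PS0 eqxx PC.
  have -> : P = S :&: C by apply/eqP; rewrite eqEcard sP cardP leqnn.
  by rewrite setUC setID.
have [x xSCP] : exists x, x \in (S :&: C) :\: P.
  apply/set0Pn; rewrite setD_eq0; apply: contraTN yPS => sSP.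
  have -> : P = S :&: C by apply/eqP; rewrite eq_sym eqEcard sSP cardP leqnn.
  by rewrite setDIl setDv set0I inE.
move: xSCP yPS; rewrite !inE => /andP [xP /andP [xS xC]] /andP [yS yP].
have yC : y \in C by apply: (subsetP PC).
pose S1 := tperm x y @: S.
have S1E z : (z \in S1) = (tperm x y z \in S).
  by rewrite /S1 (can2_imset_pre _ (tpermK x y) (tpermK x y)) inE.
have S1C : S1 :\: C = S :\: C.
  by apply/setP => z; rewrite !inE S1E; case: tpermP => [-> | -> | _ _]; rewrite ?xC ?yC.
rewrite -S1C; apply: IH.
- rewrite (cardsD1 y) !inE yP yS /= ltnS in ltPS; apply: leq_trans ltPS.
  apply: subset_leq_card; apply/subsetP => z; rewrite !inE S1E.
  by case: tpermP => [-> | -> | /eqP zx /eqP zy]; rewrite ?(negbTE xP) ?xS ?andbF ?zy.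
- rewrite cardP -(card_preimset _ (inv_inj (tpermK x y))); apply: eq_card => z.
  by rewrite !inE S1E; case: tpermP => [-> | -> | _ _]; rewrite ?xC ?yC.
- exact: mim_cover_involution (tpermK x y) (tperm_twins (twC x y xC yC)) cS.
Qed.
End Twins.

Section Agreement.
Variables (T : finType) (e e' : rel T).
Implicit Types (S D : {set T}).

Lemma one_regular_agree S : {in S &, forall x y, e x y = e' x y} ->
  one_regular e S -> one_regular e' S.
Proof.
move=> ee' /forall_inP reg; apply/forall_inP => x xS; rewrite -(eqP (reg x xS)).
by apply/eqP/eq_card => z; rewrite !inE; case: (boolP (z \in S)) => zS; rewrite ?andbF ?ee'.
Qed.

Lemma mim_cover_agree D S : {in ~: D &, forall x y, e x y = e' x y} ->
  [disjoint S & D] -> D \subset cnbhs e S -> D \subset cnbhs e' S ->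
  mim_cover e S -> mim_cover e' S.
Proof.
move=> ee'; rewrite disjoints_subset => /subsetP SD /subsetP D1 /subsetP D2.
case/andP=> reg /edge_dominatingP dom.
have cnbhsE : cnbhs e S = cnbhs e' S.
  apply/setP => y; case: (boolP (y \in D)) => [yD | yD]; first by rewrite D1 ?D2.
  rewrite !inE; apply: eq_existsb => x; case: (boolP (x \in S)) => //= xS.
  have yD' : y \in ~: D by rewrite inE.
  by rewrite !inE ee' //; apply: SD.
apply/andP; split; first by apply: one_regular_agree reg => x y /SD xD /SD yD; apply: ee'.
apply/edge_dominatingP => a b eab; rewrite -cnbhsE => aN bN.
have notD z : z \notin cnbhs e S -> z \in ~: D by rewrite in_setC; apply: contra; apply: D1.
by apply: (dom a b) => //; rewrite ee' ?notD.
Qed.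

End Agreement.

Lemma one_regular_clique (T : finType) (e : rel T) (K S : {set T}) :
  {in K &, forall x y, x != y -> e x y} -> one_regular e S -> #|S :&: K| <= 2.
Proof.
move=> clK /forall_inP reg; have [-> | [x xSK]] := set_0Vmem (S :&: K); first by rewrite cards0.
rewrite (cardsD1 x) xSK ltnS; move: xSK; rewrite inE => /andP [xS xK].
rewrite -(eqP (reg x xS)); apply/subset_leq_card/subsetP => z.
by rewrite !inE => /and3P [zx zS zK]; rewrite zS andbT clK // eq_sym.
Qed.

Section TwinGraph.
Variable T : finType.
Implicit Types (r : rel T) (L : {set T}) (u w x y z : T).

Lemma make_twinE r w u : symmetric r -> irreflexive r -> w \in cnbh r u ->
  make_twin r w u =2 fun x y =>
    if x == w then (y != w) && (y \in cnbh r u)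
    else if y == w then (x != w) && (x \in cnbh r u) else r x y.
Proof.
move=> rsym rirr wu.
have rowE z : (if z \in nbh r w :\: cnbh r u then false
               else if z \in nbh r u :\: cnbh r w then true else r w z)
              = (z != w) && (z \in cnbh r u).
  rewrite !inE; have [-> | zw] := eqVneq z w; first by rewrite rirr /= !andbF.
  rewrite ?(negbTE zw) /=; have [zu | zu] := eqVneq z u; last first.
    by case: (r w z); case: (r u z).
  have rwu : r w u by move: wu; rewrite !inE -zu eq_sym (negbTE zw) /= rsym.
  by rewrite zu rwu.
by move=> x y; rewrite /make_twin !rowE.
Qed.

Definition twin_graph (e : rel T) L v : rel T := fun x y =>
  if x \in L then (y != x) && (y \in cnbh e v)
  else if y \in L then (x != y) && (x \in cnbh e v) else e x y.

Variables (e : rel T) (v : T).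
Hypothesis esym : symmetric e.
Hypothesis eirr : irreflexive e.

Lemma twin_graph_sym L : L \subset cnbh e v -> symmetric (twin_graph e L v).
Proof.
move=> /subsetP Lv x y; rewrite /twin_graph.
case: (boolP (x \in L)) => xL; case: (boolP (y \in L)) => yL //=.
by rewrite !Lv // eq_sym.
Qed.

Lemma twin_graph_irr L : irreflexive (twin_graph e L v).
Proof. by move=> x; rewrite /twin_graph eqxx eirr; case: (x \in L). Qed.

Lemma cnbh_twin_graph L : L \subset cnbh e v -> cnbh (twin_graph e L v) v = cnbh e v.
Proof.
move=> /subsetP Lv; apply/setP => y; have [-> | yv] := eqVneq y v; first by rewrite !setU11.
have Lnbh z : z \in L -> z != v -> e v z by move=> /Lv; rewrite !inE => /orP [-> | ->].
rewrite !in_setU1 (negbTE yv) !inE /twin_graph !in_setU1 /= !inE eqxx.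
case: (boolP (y \in L)) => yL; case: (boolP (v \in L)) => vL //=;
  by rewrite ?(negbTE yv) // eq_sym yv Lnbh.
Qed.

Lemma make_twin_graph r L w : r =2 twin_graph e L v -> L \subset cnbh e v ->
  w \in cnbh e v -> make_twin r w v =2 twin_graph e (w |: L) v.
Proof.
move=> rE Lv wv.
have cnbh_r : cnbh r v = cnbh e v.
  by rewrite -(cnbh_twin_graph Lv); apply/setP => z; rewrite !inE rE.
have rsym : symmetric r by move=> x y; rewrite !rE twin_graph_sym.
have rirr : irreflexive r by move=> x; rewrite rE twin_graph_irr.
move=> x y; rewrite make_twinE ?cnbh_r // /twin_graph !(in_setU1 _ w) rE /twin_graph.
have [-> | xw] := eqVneq x w; first by [].
have [-> | yw] := eqVneq y w => //=.
case: (boolP (x \in L)) => xL /=; last by rewrite xw.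
by rewrite (subsetP Lv x xL) wv eq_sym xw.
Qed.

Lemma foldl_make_twin (s : seq T) r L : {subset s <= cnbh e v} -> L \subset cnbh e v ->
  r =2 twin_graph e L v ->
  foldl (fun r w => make_twin r w v) r s =2 twin_graph e (L :|: [set w in s]) v.
Proof.
elim: s r L => [|w s IH] r L /= sv Lv rE.
  by move=> x y; rewrite rE; congr twin_graph; apply/setP => z; rewrite !inE orbF.
have wv : w \in cnbh e v by apply: sv; rewrite mem_head.
move=> x y; rewrite (IH _ (w |: L)).
- by congr twin_graph; apply/setP => z; rewrite !inE orbA [(z == w) || _]orbC.
- by move=> z zs; apply: sv; rewrite inE zs orbT.
- by rewrite subUset sub1set wv.
- exact: make_twin_graph.
Qed.

Lemma twin_toE (A : {set T}) : A \subset cnbh e v -> twin_to e A v =2 twin_graph e A v.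
Proof.
move=> Av x y; rewrite /twin_to (@foldl_make_twin _ _ set0) ?sub0set //.
- by rewrite set0U; congr twin_graph; apply/setP => z; rewrite inE mem_enum.
- by move=> z; rewrite mem_enum; apply: (subsetP Av).
- by move=> a b; rewrite /twin_graph !inE.
Qed.

Lemma twin_to_twins u : cnbh e u = cnbh e v -> twin_to e (twins e u) v = e.
Proof.
move=> tw; have twE x : x \in twins e u -> forall y, (y != x) && (y \in cnbh e v) = e x y.
  rewrite inE -tw => /eqP <- y; rewrite !inE.
  by have [-> | ] := eqVneq y x; rewrite ?eirr.
have Av : twins e u \subset cnbh e v.
  apply/subsetP => x xA.
  have /eqP <- : cnbh e x == cnbh e v by rewrite -tw; move: xA; rewrite inE.
  exact: setU11.
apply: functional_extensionality => x; apply: functional_extensionality => y.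
rewrite twin_toE // /twin_graph; case: ifP => [/twE // | _]; case: ifP => [/twE | //].
by move->; rewrite esym.
Qed.
End TwinGraph.

Section Traces.
Variable T : finType.
Implicit Types (C D : {set T}) (X : {set {set T}}).

Definition traces C X : {set {set T}} := [set S :\: C | S in X].

Lemma tracesU C D X : traces D (traces C X) = traces (C :|: D) X.
Proof. by rewrite /traces -imset_comp; apply: eq_imset => S; rewrite /= setDDl. Qed.

Lemma card_traces_le C X k : {in X, forall S, #|S :&: C| = k} ->
  #|X| <= 'C(#|C|, k) * #|traces C X|.
Proof.
move=> XC; rewrite -cards_draws -cardsX.
rewrite -(@card_in_imset _ _ (fun S => (S :&: C, S :\: C)) X); last first.
  by move=> S1 S2 _ _ [eI eD]; rewrite -(setID S1 C) -(setID S2 C) eI eD.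
apply/subset_leq_card/subsetP => _ /imsetP [S SX ->].
by rewrite !inE subsetIr XC // eqxx /=; apply: imset_f.
Qed.

Lemma card_traces_ge C X k : {in X, forall S, #|S :&: C| = k} ->
  {in X, forall S (P : {set T}), P \subset C -> #|P| = k -> (S :\: C) :|: P \in X} ->
  'C(#|C|, k) * #|traces C X| <= #|X|.
Proof.
move=> XC Xrep; rewrite -cards_draws -cardsX.
have splitC (P S : {set T}) : P \subset C ->
    (P :|: S :\: C) :&: C = P /\ (P :|: S :\: C) :\: C = S :\: C.
  move=> /subsetP PC; split; apply/setP => z; rewrite !inE;
    case: (boolP (z \in C)) => zC; rewrite ?orbF ?andbT ?andbF //=;
    by rewrite (contraNF (@PC z) zC).
have inj : {in setX [set P : {set T} | P \subset C & #|P| == k] (traces C X) &,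
             injective (fun PR : {set T} * {set T} => PR.1 :|: PR.2)}.
  move=> [P1 R1] [P2 R2]; rewrite !inE /= => /andP [/andP [P1C _] /imsetP [S1 _ ->]].
  move=> /andP [/andP [P2C _] /imsetP [S2 _ ->]] eU.
  have [eI1 eD1] := splitC P1 S1 P1C; have [eI2 eD2] := splitC P2 S2 P2C.
  by congr pair; [rewrite -eI1 eU eI2 | rewrite -eD1 eU eD2].
rewrite -(card_in_imset inj); apply/subset_leq_card/subsetP => U /imsetP [[P R]].
rewrite !inE /= => /andP [/andP [PC /eqP cP] /imsetP [S SX ->]] ->.
by rewrite setUC Xrep.
Qed.
End Traces.

Lemma cardsU_disjoint (T : finType) (A B : {set T}) :
  [disjoint A & B] -> #|A :|: B| = #|A| + #|B|.
Proof. by move=> dAB; apply/eqP; rewrite (leq_card_setU A B).2. Qed.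

Lemma card_traces2_le (T : finType) (A B : {set T}) (X : {set {set T}}) i j :
  [disjoint A & B] -> {in X, forall S, #|S :&: A| = i} -> {in X, forall S, #|S :&: B| = j} ->
  #|X| <= 'C(#|A|, i) * 'C(#|B|, j) * #|traces (A :|: B) X|.
Proof.
move=> dAB XA XB; apply: leq_trans (card_traces_le XA) _; rewrite -mulnA leq_mul2l -tracesU.
apply/orP; right; apply: card_traces_le => _ /imsetP [S SX ->].
rewrite setDE setIAC (setIidPl _) ?XB //.
by rewrite (subset_trans (subsetIr S B)) // -disjoints_subset disjoint_sym.
Qed.

Section Profiles.
Variable T : finType.
Implicit Types (e : rel T) (A B C : {set T}).

Definition MIM_covers_meeting e C k : {set {set T}} :=
  [set S in MIM_covers e | #|S :&: C| == k].

Definition clique_profile e A B i j :=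
  #|traces (A :|: B) (MIM_covers_meeting e A i :&: MIM_covers_meeting e B j)|.

Definition twin_profile e C k := #|traces C (MIM_covers_meeting e C k)|.

Lemma clique_profileC e A B i j : clique_profile e B A j i = clique_profile e A B i j.
Proof. by rewrite /clique_profile setIC setUC. Qed.

Lemma card_MIM_covers_clique e A B : [disjoint A & B] ->
  {in A :|: B &, forall x y, x != y -> e x y} ->
  #|MIM_covers e| <= clique_profile e A B 0 0 + #|A| * clique_profile e A B 1 0
    + 'C(#|A|, 2) * clique_profile e A B 2 0 + #|B| * clique_profile e A B 0 1
    + 'C(#|B|, 2) * clique_profile e A B 0 2 + #|A| * #|B| * clique_profile e A B 1 1.
Proof.
move=> dAB clAB; pose X i j := MIM_covers_meeting e A i :&: MIM_covers_meeting e B j.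
have leX i j : #|X i j| <= 'C(#|A|, i) * 'C(#|B|, j) * clique_profile e A B i j.
  by apply: card_traces2_le => // S; rewrite !inE => /andP [/andP [_ /eqP ?] /andP [_ /eqP ?]].
have cover_X : MIM_covers e \subset X 0 0 :|: X 1 0 :|: X 2 0 :|: X 0 1 :|: X 0 2 :|: X 1 1.
  apply/subsetP => S; rewrite inE => cS; have /andP [reg _] := cS.
  have := one_regular_clique clAB reg.
  rewrite setIUr cardsU_disjoint; last first.
    by rewrite -setI_eq0 setIACA setIid (disjoint_setI0 dAB) setI0.
  rewrite !inE cS /=.
  by case: #|S :&: A| => [|[|[|i]]]; case: #|S :&: B| => [|[|[|j]]].
have := leX 0 0; have := leX 1 0; have := leX 2 0; have := leX 0 1; have := leX 0 2.
have := leX 1 1; rewrite !bin0 !bin1 !mul1n !muln1 => h11 h02 h01 h20 h10 h00.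
apply: leq_trans (subset_leq_card cover_X) _.
apply: leq_trans (leq_card_setU _ _) (leq_add _ h11).
apply: leq_trans (leq_card_setU _ _) (leq_add _ h02).
apply: leq_trans (leq_card_setU _ _) (leq_add _ h01).
apply: leq_trans (leq_card_setU _ _) (leq_add _ h20).
exact: leq_trans (leq_card_setU _ _) (leq_add h00 h10).
Qed.

Lemma card_MIM_covers_twins e C : symmetric e -> irreflexive e ->
  {in C &, forall x y, cnbh e x = cnbh e y} ->
  twin_profile e C 0 + #|C| * twin_profile e C 1 + 'C(#|C|, 2) * twin_profile e C 2
    <= #|MIM_covers e|.
Proof.
move=> esym eirr twC; pose X k := MIM_covers_meeting e C k.
have geX k : 'C(#|C|, k) * twin_profile e C k <= #|X k|.
  apply: card_traces_ge => S; rewrite !inE => /andP [cS /eqP cSC] // P PC cP.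
  rewrite !inE mim_cover_replace_twins ?cP //= setIUl setIDAC setDIl setDv setI0 set0U.
  by rewrite (setIidPl PC) cP.
have := geX 0; have := geX 1; have := geX 2; rewrite bin0 bin1 mul1n => h2 h1 h0.
apply: leq_trans (leq_add (leq_add h0 h1) h2) _.
rewrite -!cardsU_disjoint.
- by apply/subset_leq_card/subsetP => S; rewrite !inE => /orP [/orP [] | ] /andP [].
- by apply/pred0P => S /=; rewrite !inE; case: #|S :&: C| => [|[|[|n]]]; rewrite ?andbF.
- by apply/pred0P => S /=; rewrite !inE; case: #|S :&: C| => [|[|[|n]]]; rewrite ?andbF.
Qed.

End Profiles.

Section AdjacentVertices.
Variable T : finType.
Variable e : rel T.
Hypothesis esym : symmetric e.
Hypothesis eirr : irreflexive e.
Variables u v : T.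
Hypothesis huv : e u v.
Hypothesis not_twins : cnbh e u != cnbh e v.

Local Notation A := (twins e u).
Local Notation B := (twins e v).
Local Notation C := (twins e u :|: twins e v).
Local Notation e1 := (twin_graph e (twins e u) v).
Local Notation W4 := (~: (cnbh e u :|: cnbh e v)).
Implicit Types (S R X : {set T}) (x y z : T).

Lemma cnbh_id x : x \in cnbh e x.
Proof. exact: setU11. Qed.

Lemma cnbh_adj x y : e x y -> y \in cnbh e x.
Proof. by rewrite !inE => ->; rewrite orbT. Qed.

Lemma cnbh_sym x y : (y \in cnbh e x) = (x \in cnbh e y).
Proof. by rewrite !inE eq_sym esym. Qed.

Lemma twins_id w : w \in twins e w.
Proof. by rewrite inE. Qed.

Lemma cnbh_twins w x : x \in twins e w -> cnbh e x = cnbh e w.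
Proof. by rewrite inE => /eqP. Qed.

Lemma disjoint_twins : [disjoint A & B].
Proof.
apply/pred0P => x /=; rewrite !inE; apply/negbTE/andP => -[/eqP xu /eqP xv].
by move: not_twins; rewrite -xu xv eqxx.
Qed.

Lemma twins_cnbh x : x \in C -> (x \in cnbh e u) && (x \in cnbh e v).
Proof.
have vu : v \in cnbh e u by apply: cnbh_adj.
have uv : u \in cnbh e v by apply: cnbh_adj; rewrite esym.
by rewrite inE => /orP [] /cnbh_twins cx; rewrite cnbh_sym cx ?vu ?uv cnbh_sym cx cnbh_id.
Qed.

Lemma twins_clique : {in C &, forall x y, x != y -> e x y}.
Proof.
move=> x y xC yC xy; have /andP [yu yv] := twins_cnbh yC.
move: xC; rewrite inE => /orP [] /cnbh_twins cx; [move: yu | move: yv];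
  by rewrite -cx !inE eq_sym (negbTE xy).
Qed.

Lemma twinsA_cnbh : A \subset cnbh e v.
Proof. by apply/subsetP => x xA; have /andP [] := twins_cnbh (subsetP (subsetUl A B) x xA). Qed.

Lemma e1_sym : symmetric e1.
Proof. exact (twin_graph_sym esym twinsA_cnbh). Qed.

Lemma e1_irr : irreflexive e1.
Proof. exact (twin_graph_irr v eirr A). Qed.

Lemma cnbh_e1 c : c \in C -> cnbh e1 c = cnbh e v.
Proof.
move=> cC; apply/setP => y; rewrite in_setU1 [y \in nbh _ _]inE /twin_graph.
have [cA | cA] := boolP (c \in A).
  by have [-> | //] := eqVneq y c; rewrite (subsetP twinsA_cnbh c cA).
have cB : c \in B by move: cC; rewrite inE (negbTE cA).
case: (boolP (y \in A)) => yA /=; last by rewrite -(cnbh_twins cB) in_setU1 inE.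
have cy : c != y by apply: contraNneq cA => ->.
by rewrite cy (subsetP twinsA_cnbh y yA) (andP (twins_cnbh cC)).2 orbT.
Qed.

Lemma MIM_covers_avoid_nbh :
  ~ (exists M, M \in MIM e /\ cover M \subset (nbh e u :\: cnbh e v) :|: W4 /\
       cover M :&: (nbh e u :\: cnbh e v) != set0) ->
  {in MIM_covers e, forall S, [disjoint S & cnbh e v] -> [disjoint S & nbh e u]}.
Proof.
move=> noM S cS dSv; apply: contraT => dSu; exfalso; apply: noM.
have [M MM covM] := MIM_coversP esym eirr cS; exists M; rewrite covM; split=> //; split.
  apply/subsetP => x xS; have xv := disjointFr dSv xS.
  have xu : x != u by apply: contraFneq xv => ->; rewrite cnbh_adj // esym.
  move: xv; rewrite !inE => /norP [/negbTE -> /negbTE ->]; rewrite (negbTE xu) /=.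
  by case: (e u x).
move: dSu; rewrite -setI_eq0 => /set0Pn [x /setIP [xS xu]].
by apply/set0Pn; exists x; rewrite in_setI in_setD xS xu (disjointFr dSv xS).
Qed.

Hypothesis avoid_u :
  {in MIM_covers e, forall S, [disjoint S & cnbh e v] -> [disjoint S & nbh e u]}.
Hypothesis avoid_v :
  {in MIM_covers e, forall S, [disjoint S & cnbh e u] -> [disjoint S & nbh e v]}.

Lemma MIM_cover_meets_cnbh S : S \in MIM_covers e -> exists2 s, s \in S & s \in cnbh e v.
Proof.
move=> cS; have [dSv | ] := boolP [disjoint S & cnbh e v]; last first.
  by rewrite -setI_eq0 => /set0Pn [s /setIP [sS sv]]; exists s.
have dSu := avoid_u cS dSv; move: cS; rewrite inE => /andP [_ /edge_dominatingP dom].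
exfalso; apply: (dom u v huv); apply/notin_cnbhsP; split=> [|x xS].
- by rewrite (disjointFl dSv) // cnbh_adj // esym.
- by move: (disjointFr dSu xS); rewrite inE esym => ->.
- by rewrite (disjointFl dSv) ?cnbh_id.
- by move: (disjointFr dSv xS); rewrite cnbh_sym; apply: contraFN => /cnbh_adj.
Qed.

Lemma MIM_cover_meets_nbh S : S \in MIM_covers e -> u \notin S -> exists2 s, s \in S & e u s.
Proof.
move=> cS uS; have [s sS sv] := MIM_cover_meets_cnbh cS.
have [dSu | ] := boolP [disjoint S & cnbh e u]; last first.
  rewrite -setI_eq0 => /set0Pn [t /setIP [tS]]; rewrite !inE => /orP [/eqP tu | eut].
    by rewrite -tu tS in uS.
  by exists t.
have sv' : s != v by apply: contraTneq sS => ->; rewrite (disjointFl dSu) ?cnbh_adj.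
by move: (disjointFr (avoid_v cS dSu) sS); rewrite !inE (negbTE sv') /= in sv *; rewrite sv.
Qed.

Lemma e1_off x y : x \notin A -> y \notin A -> e1 x y = e x y.
Proof. by move=> xA yA; rewrite /twin_graph (negbTE xA) (negbTE yA). Qed.

Lemma clique_profile_0_le j : clique_profile e A B 0 j <= twin_profile e1 C j.
Proof.
apply/subset_leq_card/imsetS/subsetP => S; rewrite !inE.
case/andP=> /andP [cS /eqP SA0] /andP [_ /eqP SBj].
have dSA : [disjoint S & A] by rewrite -setI_eq0 -cards_eq0 SA0.
have uS : u \notin S by rewrite (disjointFl dSA) ?twins_id.
rewrite setIUr cardsU_disjoint ?SA0 ?SBj ?eqxx ?andbT; last first.
  by rewrite -setI_eq0 setIACA (disjoint_setI0 disjoint_twins) setI0.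
have cSM : S \in MIM_covers e by rewrite inE.
have [s1 s1S eus1] := MIM_cover_meets_nbh cSM uS.
have [s2 s2S s2v] := MIM_cover_meets_cnbh cSM.
apply: (mim_cover_agree (D := A)) cS => //.
- by move=> x y; rewrite !in_setC => xA yA; rewrite e1_off.
- apply/subsetP => a aA; apply: (cnbhs_adj s1S); rewrite esym.
  have : s1 \in cnbh e a by rewrite (cnbh_twins aA) cnbh_adj.
  by rewrite !inE => /orP [/eqP sa | //]; rewrite -sa (disjointFr dSA s1S) in aA.
- apply/subsetP => a aA; apply: (cnbhs_adj s2S); rewrite e1_sym /twin_graph aA s2v andbT.
  by apply: contraTneq aA => <-; rewrite (disjointFr dSA s2S).
Qed.

Local Notation X11 := (MIM_covers_meeting e A 1 :&: MIM_covers_meeting e B 1).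

Lemma meeting11_pair S : S \in X11 ->
  exists a b, [/\ a \in A, b \in B, e a b & S :&: C = [set a; b]].
Proof.
rewrite !inE => /andP [/andP [_ /cards1P [a SA]] /andP [_ /cards1P [b SB]]].
have /setIP [_ aA] : a \in S :&: A by rewrite SA set11.
have /setIP [_ bB] : b \in S :&: B by rewrite SB set11.
exists a, b; split; rewrite ?setIUr ?SA ?SB //.
apply: twins_clique; rewrite ?in_setU ?aA ?bB ?orbT //.
by apply: contraTneq bB => <-; rewrite (disjointFr disjoint_twins aA).
Qed.

Lemma trace11_far S : S \in X11 ->
  [/\ S :\: C \subset W4, one_regular e (S :\: C) &
      forall x y, e x y -> x \in W4 -> y \in W4 ->
        x \notin cnbhs e (S :\: C) -> y \notin cnbhs e (S :\: C) -> False].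
Proof.
move=> SX; have [a [b [aA bB eab SC]]] := meeting11_pair SX.
have cS : mim_cover e S by move: SX; rewrite !inE => /andP [/andP [cS _] _].
case/andP: cS => reg /edge_dominatingP dom.
have aS : a \in S by apply: (subsetP (subsetIl S C)); rewrite SC set21.
have bS : b \in S by apply: (subsetP (subsetIl S C)); rewrite SC set22.
have -> : S :\: C = S :\: [set a; b] by rewrite -SC setDIr setDv set0U.
have W4E z : (z \in W4) = (z \notin cnbh e a) && (z \notin cnbh e b).
  by rewrite in_setC in_setU negb_or (cnbh_twins aA) (cnbh_twins bB).
split.
- apply/subsetP => r /setDP [rS]; rewrite in_set2 negb_or => /andP [ra rb].
  rewrite W4E !in_setU1 (negbTE ra) (negbTE rb) !inE /=; apply/andP; split.
    by apply: contra rb => ear; rewrite (one_regular_uniq reg aS rS bS ear eab).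
  by apply: contra ra => ebr; rewrite (one_regular_uniq reg bS rS aS ebr) // esym.
- exact: one_regular_setD_edge.
have liftN z : z \in W4 -> z \notin cnbhs e (S :\: [set a; b]) -> z \notin cnbhs e S.
  rewrite W4E => /andP [za zb] /notin_cnbhsP [zR nadj]; apply/notin_cnbhsP; split.
    have zab : z \notin [set a; b].
      rewrite in_set2; apply/norP; split; [move: za | move: zb];
        by apply: contraNneq => ->; apply: cnbh_id.
    by apply: contra zR => zS; rewrite in_setD zab zS.
  move=> s sS; have [sab | sab] := boolP (s \in [set a; b]).
    by case/set2P: sab => ->; [apply: contraNN za | apply: contraNN zb]; apply: cnbh_adj.
  by apply: nadj; rewrite in_setD sab sS.
by move=> x y exy xW yW xN yN; apply: (dom x y exy); apply: liftN.
Qed.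

Definition far_extension R X := [&& R \subset X, X \subset ~: cnbh e v & one_regular e X].

Lemma maxset_far_dominates R X : maxset (far_extension R) X ->
  forall x y, e x y -> x \notin cnbh e v -> y \notin cnbh e v ->
    x \notin cnbhs e X -> y \notin cnbhs e X -> False.
Proof.
move=> /maxsetP [/and3P [RX XN reg] maxX] x y exy xv yv xN yN.
have sub : X \subset x |: (y |: X) by apply: subset_trans (subsetU1 y X) (subsetU1 x _).
have ext : far_extension R (x |: (y |: X)).
  rewrite /far_extension (subset_trans RX sub) one_regular_add // andbT.
  by rewrite !subUset !sub1set !in_setC xv yv XN.
by move: xN; rewrite -(maxX _ ext sub) cnbhs_mem // setU11.
Qed.

Lemma mim_cover_e1_far X : X \subset ~: cnbh e v -> one_regular e X ->
  (forall x y, e x y -> x \notin cnbh e v -> y \notin cnbh e v ->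
     x \notin cnbhs e X -> y \notin cnbhs e X -> False) ->
  mim_cover e1 (u |: (v |: X)).
Proof.
move=> /subsetP XN reg dom.
have Xv x : x \in X -> x \notin cnbh e v by move=> /XN; rewrite in_setC.
have notA x : x \notin cnbh e v -> x \notin A.
  by apply: contra; apply: (subsetP twinsA_cnbh).
have uA : u \in A := twins_id u.
have vA : v \notin A by rewrite inE eq_sym.
have uv : u \in cnbh e v by rewrite cnbh_adj // esym.
have uX : u \notin X by apply: contraL uv; apply: Xv.
have vX : v \notin X by apply: contraL (cnbh_id v); apply: Xv.
apply/andP; split.
  apply: (one_regular_add e1_sym e1_irr).
  - by apply: one_regular_agree reg => x y /Xv/notA xA /Xv/notA yA; rewrite e1_off.
  - by rewrite /twin_graph uA cnbh_id andbT; apply: contraTneq huv => ->; rewrite eirr.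
  - apply/notin_cnbhsP; split=> // x /Xv xv.
    by rewrite e1_sym /twin_graph uA (negbTE xv) andbF.
  - apply/notin_cnbhsP; split=> // x /Xv xv.
    by rewrite (e1_off (notA _ xv) vA); apply: contra xv => exv; rewrite cnbh_sym cnbh_adj.
apply/edge_dominatingP => x y exy.
have outside z : z \notin cnbhs e1 (u |: (v |: X)) -> z \notin cnbh e v /\ z \notin cnbhs e X.
  move=> zN; have zv : z \notin cnbh e v.
    have Nu : cnbh e1 u = cnbh e v by apply: cnbh_e1; rewrite in_setU uA.
    by apply: contra zN; rewrite -Nu => zu; apply: (cnbhs_cnbh _ zu); rewrite setU11.
  split=> //; move/notin_cnbhsP: zN => [zS nadj]; apply/notin_cnbhsP; split.
    by apply: contra zS => zX; rewrite !inE zX !orbT.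
  move=> s sX; rewrite -(e1_off (notA _ (Xv _ sX)) (notA _ zv)).
  by apply: nadj; rewrite !inE sX !orbT.
move=> /outside [xv xN] /outside [yv yN].
by apply: (dom x y) => //; rewrite -(e1_off (notA _ xv) (notA _ yv)).
Qed.

Lemma twins_pair_far X : X \subset ~: cnbh e v ->
  (u |: (v |: X)) :&: C = [set u; v] /\ (u |: (v |: X)) :\: C = X.
Proof.
move=> /subsetP XN.
have XC x : x \in X -> x \notin C.
  by move=> /XN; rewrite in_setC; apply: contra => /twins_cnbh /andP [].
have uC : u \in C by rewrite in_setU twins_id.
have vC : v \in C by rewrite in_setU twins_id orbT.
have zE z : z \in u |: (v |: X) = [|| z == u, z == v | z \in X] by rewrite !in_setU1.
split; apply/setP => z; rewrite ?in_setI ?in_setD zE ?in_set2.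
- have [-> | zu] := eqVneq z u; first by rewrite uC.
  have [-> | zv] := eqVneq z v; first by rewrite vC.
  by case: (boolP (z \in X)) => // /XC /negbTE.
- have [-> | zu] := eqVneq z u; first by rewrite uC (contraTF (XC u) uC).
  have [-> | zv] := eqVneq z v; first by rewrite vC (contraTF (XC v) vC) orbT.
  by case: (boolP (z \in X)) => [zX | _] /=; rewrite ?andbF // andbT; apply: XC.
Qed.

Definition far_part X := [set x in X | (x \in W4) && [forall y in X, e x y ==> (y \in W4)]].

Lemma far_part_extension S X : S \in X11 -> S :\: C \subset X -> one_regular e X ->
  far_part X = S :\: C.
Proof.
move=> SX RX regX; have [/subsetP RW regR domR] := trace11_far SX.
apply/setP => x; rewrite inE; apply/andP/idP => [[xX /andP [xW /forall_inP xnb]] | xR].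
  apply: contraT => xR; have [y yX exy] := one_regular_partner regX xX.
  have yR : y \notin S :\: C.
    apply: contra xR => yR; have [z zR eyz] := one_regular_partner regR yR.
    by rewrite (one_regular_uniq regX yX xX (subsetP RX z zR)) // esym.
  case: (domR x y exy xW (implyP (xnb y yX) exy));
    exact: one_regular_notin_cnbhs regR regX RX _ _.
have xX := subsetP RX x xR; split=> //; rewrite RW //=.
apply/forall_inP => y yX; apply/implyP => exy.
have [z zR exz] := one_regular_partner regR xR.
by rewrite (one_regular_uniq regX xX yX (subsetP RX z zR) exy exz) RW.
Qed.

Lemma clique_profile_11_le : clique_profile e A B 1 1 <= twin_profile e1 C 2.
Proof.
apply: leq_trans (leq_imset_card far_part _).
apply/subset_leq_card/subsetP => _ /imsetP [S SX ->].
have [RW regR _] := trace11_far SX.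
have extR : far_extension (S :\: C) (S :\: C).
  by rewrite /far_extension subxx regR andbT (subset_trans RW) // setCS subsetUr.
have [X maxX RX] := maxset_exists extR; have /and3P [_ XN regX] := maxsetp maxX.
have [uvXC uvX] := twins_pair_far XN.
apply/imsetP; exists X; last by rewrite (far_part_extension SX RX regX).
apply/imsetP; exists (u |: (v |: X)) => //.
rewrite !inE mim_cover_e1_far //=; last exact: maxset_far_dominates maxX.
have uv : u != v by apply: contraTneq huv => ->; rewrite eirr.
by rewrite uvXC cards2 uv.
Qed.

Lemma card_MIM_twin_to : #|MIM (twin_to e A v)| = #|MIM_covers e1|.
Proof.
have -> : twin_to e A v = e1.
  by do 2 apply: functional_extensionality => ?; apply: (twin_toE esym eirr twinsA_cnbh).
exact: card_MIM_covers e1_sym e1_irr.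
Qed.

Lemma twin_to_bounds :
  [/\ twin_profile e1 C 0 + (#|A| + #|B|) * twin_profile e1 C 1
        + 'C(#|A| + #|B|, 2) * twin_profile e1 C 2 <= #|MIM (twin_to e A v)|,
      forall j, clique_profile e A B 0 j <= twin_profile e1 C j
    & clique_profile e A B 1 1 <= twin_profile e1 C 2].
Proof.
split; [| exact: clique_profile_0_le | exact: clique_profile_11_le].
rewrite card_MIM_twin_to -cardsU_disjoint ?disjoint_twins //.
apply: card_MIM_covers_twins e1_sym e1_irr _ => x y xC yC.
by rewrite !cnbh_e1.
Qed.

End AdjacentVertices.

Theorem lemma2p3 (T : finType) (e : rel T) (esym : symmetric e)
  (eirr : irreflexive e) (u v : T) (huv : e u v) :
  (* W1 = N(u)\N[v], W3 = N(v)\N[u], W4 = V \ (N[u] ∪ N[v]) *)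
  ~ (exists M, M \in MIM e /\
       cover M \subset (nbh e u :\: cnbh e v) :|: ~: (cnbh e u :|: cnbh e v) /\
       cover M :&: (nbh e u :\: cnbh e v) != set0) ->
  ~ (exists M, M \in MIM e /\
       cover M \subset (nbh e v :\: cnbh e u) :|: ~: (cnbh e u :|: cnbh e v) /\
       cover M :&: (nbh e v :\: cnbh e u) != set0) ->
  #|MIM e| <= #|MIM (twin_to e (twins e u) v)| \/
  #|MIM e| <= #|MIM (twin_to e (twins e v) u)|.
Proof.
move=> no_W1 no_W3; have [tw | not_tw] := eqVneq (cnbh e u) (cnbh e v).
  by left; rewrite twin_to_twins.
have hvu : e v u by rewrite esym.
rewrite [cnbh e u :|: _]setUC in no_W3.
have avoid_u := MIM_covers_avoid_nbh esym eirr huv no_W1.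
have avoid_v := MIM_covers_avoid_nbh esym eirr hvu no_W3.
have [le_g1 zy zy11] := twin_to_bounds esym eirr huv not_tw avoid_u avoid_v.
have not_tw' : cnbh e v != cnbh e u by rewrite eq_sym.
have [le_g2 zx zx11] := twin_to_bounds esym eirr hvu not_tw' avoid_v avoid_u.
rewrite [#|twins e v| + _]addnC [twins e v :|: _]setUC in le_g2.
rewrite [twins e v :|: _]setUC in zx zx11.
apply: (profile_bound_or _ _ _ le_g1 zy zy11 le_g2); last 2 first.
- by move=> i; rewrite -clique_profileC.
- by rewrite -clique_profileC.
- by apply/card_gt0P; exists u; rewrite twins_id.
- by apply/card_gt0P; exists v; rewrite twins_id.
- rewrite card_MIM_covers //; apply: card_MIM_covers_clique (disjoint_twins not_tw) _.
  exact (twins_clique esym huv).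
Qed.
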